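(* Let $\mathcal G$ be a Lie superalgebra over a field of characteristic zero and let $\mathcal S\subseteq\mathcal U_{1-}$ be the space of symmetric operators on $\mathcal U_1=\mathcal G$ described below. If $A,B\in\mathcal S$, then $[A,B]\in\mathcal S$, where $[\cdot,\cdot]$ is the extended bracket described below.
   Context: Set $\mathcal U_1=\mathcal G$ with its $\mathbb Z_2$-grading. For $p\ge1$ define recursively $\mathcal U_{-p+1}=\mathrm{Hom}(\mathcal U_1,\mathcal U_{-p+2})$, $\mathbb Z_2$-graded by declaring $A$ even (resp. odd) if it preserves (resp. reverses) parity; $|u|$ is the parity of a homogeneous element, and sign formulas are for homogeneous elements extended bilinearly. Elements of $\mathcal U_{1-p}$ are operators of order $p$ (elements of $\mathcal G$ have order $0$), and an operator $A$ of order $p\ge1$ is identified with the $p$-linear map $A(x_1,\dots,x_p)=A(x_1)(x_2)\cdots(x_p)$; $\mathcal U_{1-}=\bigoplus_{p\ge0}\mathcal U_{1-p}$. An operator of order $p\ge2$ is symmetric if it is graded symmetric: $A(\dots,x_i,x_{i+1},\dots)=(-1)^{|x_i||x_{i+1}|}A(\dots,x_{i+1},x_i,\dots)$ for all homogeneous arguments and all $i$; all operators of order $0$ or $1$ are symmetric; $\mathcal S=\bigoplus_{p\ge0}\mathcal S_{1-p}$ where $\mathcal S_{1-p}$ is the space of symmetric operators of order $p$. Define $\circ$: $A\circ y=A(y)$, $y\circ A=0$ for $A$ of order $\ge1$ and $y\in\mathcal U_1$; for $A,B$ of orders $\ge1$, recursively $(A\circ B)(x)=A\circ B(x)+(-1)^{|B||x|}A(x)\circ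 B$. Define $\bullet$: $A_p\bullet B_q=\frac{p!q!}{(p+q-1)!}A_p\circ B_q$ for orders $p,q\ge1$; $A_p\bullet x=pA_p(x)$, $x\bullet A_p=0$, $x\bullet y=0$ for $x,y\in\mathcal U_1$. The bracket of $\mathcal G$ is extended to $\mathcal U_{1-}$: on $\mathcal G$ it is the given bracket, and for operators $A,B$ of orders $p,q$ with $p+q\ge1$, $[A,B]$ is the operator of order $p+q$ defined recursively by $[A,B]\bullet x=[A,B\bullet x]+(-1)^{|x||B|}[A\bullet x,B]$ for all $x\in\mathcal G$. *)

From HB Require Import structures.
From mathcomp Require Import all_boot all_order all_algebra.
Set Implicit Arguments. Unset Strict Implicit. Unset Printing Implicit Defensive.
Import Order.TTheory GRing.Theory Num.Theory.
Local Open Scope ring_scope.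

(* A Z2-graded vector space over K is modelled as G = V0 * V1,
   V0 = even part, V1 = odd part. *)
Section Graded.
Variables (K : fieldType) (V0 V1 : lmodType K).
Notation G := (V0 * V1)%type.

Definition homog (b : bool) (x : G) : Prop :=
  if b then x.1 = 0 else x.2 = 0.

Definition even_part (x : G) : G := (x.1, 0).
Definition odd_part (x : G) : G := (0, x.2).

Definition psign (x : G) : G := (x.1, - x.2).

Definition is_lie_superalgebra (br : G -> G -> G) : Prop :=
  [/\ (forall (a : K) (x y z : G), br (a *: x + y) z = a *: br x z + br y z),
      (forall (a : K) (x y z : G), br z (a *: x + y) = a *: br z x + br z y),
      (forall (a b : bool) (x y : G), homog a x -> homog b y -> homog (a (+) b) (br x y)),
      (forall (a b : bool) (x y : G), homog a x -> homog b y ->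
          br x y = - ((-1) ^+ (a && b) *: br y x))
    & (forall (a b c : bool) (x y z : G), homog a x -> homog b y -> homog c z ->
          br x (br y z) = br (br x y) z + (-1) ^+ (a && b) *: br y (br x z))].

(* Operators: an operator of order p is the p-linear map
   A(x1,...,xp) = A(x1)(x2)...(xp), represented as a function on lists
   (only its values on lists of length p matter).  An element y of G
   (order 0) is represented by any A with A [::] = y. *)
Definition operator := seq G -> G.

Definition multilinear (p : nat) (A : operator) : Prop :=
  forall (xs ys : seq G), size xs + size ys + 1 = p ->
    forall (a : K) (x y : G),
      A (xs ++ (a *: x + y) :: ys) = a *: A (xs ++ x :: ys) + A (xs ++ y :: ys).

Definition graded_symmetric (p : nat) (A : operator) : Prop :=
  forall (xs ys : seq G), size xs + size ys + 2 = p ->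
    forall (a b : bool) (x y : G), homog a x -> homog b y ->
      A (xs ++ x :: y :: ys) = (-1) ^+ (a && b) *: A (xs ++ y :: x :: ys).

Definition symmetric_op (p : nat) (A : operator) : Prop :=
  multilinear p A /\ graded_symmetric p A.

Definition app1 (A : operator) (x : G) : operator := fun ys => A (x :: ys).

(* A_p • x = p A_p(x) for p >= 1, and y • x = 0 for y of order 0 *)
Definition dotx (p : nat) (A : operator) (x : G) : operator :=
  fun ys => p%:R *: A (x :: ys).

(* (-1)^{|B|} B for homogeneous B, extended linearly *)
Definition sign_op (B : operator) : operator :=
  fun xs => psign (B (map psign xs)).

Variable br : G -> G -> G.

(* The extended bracket, by recursion on the total order n = p + q:
   [A,B] • x = [A, B • x] + (-1)^{|x||B|} [A • x, B],
   with [A,B] • x = (p+q) [A,B](x); the sign factor is extended bilinearly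
   by splitting x into its even and odd parts. *)
Fixpoint ext_br (n p q : nat) (A B : operator) (xs : seq G) {struct n} : G :=
  match n, xs with
  | 0, _ => br (A [::]) (B [::])
  | n'.+1, x :: xs' =>
      (n'.+1%:R)^-1 *:
        ((if q is q'.+1 then ext_br n' p q' A (dotx q B x) xs' else 0)
         + (if p is p'.+1 then
              ext_br n' p' q (dotx p A (even_part x)) B xs'
              + ext_br n' p' q (dotx p A (odd_part x)) (sign_op B) xs'
            else 0))
  | _.+1, [::] => 0
  end.

Definition bracket (p q : nat) (A B : operator) : operator :=
  ext_br (p + q) p q A B.

End Graded.

From HB Require Import structures.
From mathcomp Require Import all_boot all_order all_algebra.
From mathcomp Require Import zify.
Set Implicit Arguments. Unset Strict Implicit. Unset Printing Implicit Defensive.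
Import Order.TTheory GRing.Theory Num.Theory.
Local Open Scope ring_scope.

(* The symmetry of [A, B] follows from its recursive definition alone, by
   induction on the total order n = p + q.  Fixing the first argument z,
   [A, B](z) is a scalar multiple of a sum of brackets of total order n - 1
   of the symmetric operators A, B • z, A • z and the sign twist of B, hence
   symmetric in its remaining arguments.  Multilinearity in z comes from that
   of A and B, and it remains to swap the first two arguments: unfolding the
   recursion twice writes [A, B] • x • y as a sum of four brackets
   [A, B • x • y], [A • y, B • x], [A • x, B • y], [A • x • y, B] (with
   parity twists of B), which the graded symmetry of A and B permutes among
   themselves up to the common sign (-1)^(|x||y|). *)

Section Operators.
Variables (K : fieldType) (V0 V1 : lmodType K).
Local Notation G := (V0 * V1)%type.
Local Notation op := (operator V0 V1).

Fact psign_is_linear : linear (@psign K V0 V1).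
Proof. by move=> c [x0 x1] [y0 y1]; rewrite /psign /= opprD -scalerN. Qed.
HB.instance Definition _ :=
  GRing.isLinear.Build K G G _ (@psign K V0 V1) psign_is_linear.

Fact even_part_is_linear : linear (@even_part K V0 V1).
Proof. by move=> c x y; apply: injective_projections; rewrite /= ?scaler0 ?addr0. Qed.
HB.instance Definition _ :=
  GRing.isLinear.Build K G G _ (@even_part K V0 V1) even_part_is_linear.

Fact odd_part_is_linear : linear (@odd_part K V0 V1).
Proof. by move=> c x y; apply: injective_projections; rewrite /= ?scaler0 ?addr0. Qed.
HB.instance Definition _ :=
  GRing.isLinear.Build K G G _ (@odd_part K V0 V1) odd_part_is_linear.

Lemma psign_homog b (x : G) : homog b x -> psign x = (-1) ^+ b *: x.
Proof.
by case: b => Hx; apply: injective_projections;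
  rewrite /= ?Hx ?scaler0 ?oppr0 ?expr1 ?expr0 ?scaleN1r ?scale1r.
Qed.

Lemma homog_psign b (x : G) : homog b x -> homog b (psign x).
Proof. by case: b => //= ->; rewrite oppr0. Qed.

Lemma even_part_homog b (x : G) : homog b x -> even_part x = if b then 0 else x.
Proof. by case: b; case: x => x0 x1 /= ->. Qed.

Lemma odd_part_homog b (x : G) : homog b x -> odd_part x = if b then x else 0.
Proof. by case: b; case: x => x0 x1 /= ->. Qed.

Definition sign_opb (b : bool) (B : op) : op := if b then sign_op B else B.

Lemma sign_opbC a b (B : op) : sign_opb a (sign_opb b B) = sign_opb b (sign_opb a B).
Proof. by case: a b => [] []. Qed.

Lemma dotx_order0 (A : op) x l : dotx 0 A x l = 0.
Proof. exact: scale0r. Qed.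

Lemma dotx_eq0 p (A : op) x : (forall l, A l = 0) -> forall l, dotx p A x l = 0.
Proof. by move=> A0 l; rewrite /dotx A0 scaler0. Qed.

Lemma sign_opb_eq0 b (B : op) : (forall l, B l = 0) -> forall l, sign_opb b B l = 0.
Proof. by case: b => // B0 l; rewrite /= /sign_op B0 linear0. Qed.

Lemma multilinear_head p (A : op) l c x y : multilinear p.+1 A -> size l = p ->
  A (c *: x + y :: l) = c *: A (x :: l) + A (y :: l).
Proof. by move=> HA Hl; rewrite (HA [::] l) // Hl /=; lia. Qed.

Lemma multilinear_head0 p (A : op) l : multilinear p.+1 A -> size l = p -> A (0 :: l) = 0.
Proof.
move=> HA Hl; have := multilinear_head (-1) 0 0 HA Hl.
by rewrite scaler0 addr0 scaleN1r addNr.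
Qed.

Lemma multilinear_headZ p (A : op) l c x : multilinear p.+1 A -> size l = p ->
  A (c *: x :: l) = c *: A (x :: l).
Proof.
move=> HA Hl; rewrite -[c *: x]addr0 (multilinear_head c x 0 HA Hl).
by rewrite (multilinear_head0 HA Hl) addr0.
Qed.

Lemma dotx_linear p (A : op) l c x y : multilinear p.+1 A -> size l = p ->
  dotx p.+1 A (c *: x + y) l = c *: dotx p.+1 A x l + dotx p.+1 A y l.
Proof.
by move=> HA Hl; rewrite /dotx (multilinear_head _ _ _ HA Hl) scalerDr !scalerA mulrC.
Qed.

Lemma dotx_sign_opb p (B : op) a b y l : multilinear p.+1 B -> size l = p -> homog b y ->
  dotx p.+1 (sign_opb a B) y l = (-1) ^+ (a && b) *: sign_opb a (dotx p.+1 B y) l.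
Proof.
case: a => [|_ _ _]; last by rewrite scale1r.
move=> HB Hl Hy; rewrite /= /dotx /sign_op /= (psign_homog Hy).
by rewrite (multilinear_headZ _ _ HB) ?size_map // !linearZ /= !scalerA mulrC.
Qed.

Lemma symmetric_op_eq p (F H : op) : (forall l, F l = H l) ->
  symmetric_op p H -> symmetric_op p F.
Proof.
move=> eFH [H_ml H_sym]; split=> xs ys Hs.
  by move=> c x y; rewrite !eFH H_ml.
by move=> a b x y Hx Hy; rewrite !eFH (H_sym _ _ Hs a b).
Qed.

Lemma symmetric_op0 p : symmetric_op p ((fun=> 0) : op).
Proof. by split=> xs ys *; rewrite ?scaler0 ?addr0. Qed.

Lemma symmetric_opD p (F H : op) : symmetric_op p F -> symmetric_op p H ->
  symmetric_op p (fun l => F l + H l).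
Proof.
move=> [F_ml F_sym] [H_ml H_sym]; split=> xs ys Hs.
  by move=> c x y; rewrite F_ml // H_ml // scalerDr addrACA.
by move=> a b x y Hx Hy; rewrite (F_sym _ _ Hs a b) // (H_sym _ _ Hs a b) // scalerDr.
Qed.

Lemma symmetric_opZ p (F : op) k : symmetric_op p F ->
  symmetric_op p (fun l => k *: F l).
Proof.
move=> [F_ml F_sym]; split=> xs ys Hs.
  by move=> c x y; rewrite F_ml // scalerDr !scalerA mulrC.
by move=> a b x y Hx Hy; rewrite (F_sym _ _ Hs a b) // !scalerA mulrC.
Qed.

Lemma symmetric_op_sum p (I : Type) (s : seq I) (F : I -> op) :
  (forall i, symmetric_op p (F i)) -> symmetric_op p (fun l => \sum_(i <- s) F i l).
Proof.
move=> HF; split=> xs ys Hs.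
  move=> c x y; rewrite scaler_sumr -big_split.
  by apply: eq_bigr => i _; rewrite (HF i).1.
move=> a b x y Hx Hy; rewrite scaler_sumr.
by apply: eq_bigr => i _; rewrite ((HF i).2 _ _ Hs a b).
Qed.

Lemma symmetric_op_dotx p (A : op) x : symmetric_op p A -> symmetric_op p.-1 (dotx p A x).
Proof.
case: p => [|p] [A_ml A_sym].
  by apply: symmetric_op_eq => [l|]; [exact: dotx_order0 | exact: symmetric_op0].
split=> xs ys Hs.
  move=> c y z; rewrite /dotx -!cat_cons A_ml; last by move: Hs => /=; lia.
  by rewrite scalerDr !scalerA mulrC.
move=> a b y z Hy Hz; rewrite /dotx -!cat_cons (A_sym _ _ _ a b) //.
  by rewrite !scalerA mulrC.
by move: Hs => /=; lia.
Qed.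

Lemma symmetric_op_sign p (B : op) : symmetric_op p B -> symmetric_op p (sign_op B).
Proof.
move=> [B_ml B_sym]; split=> xs ys Hs.
  by move=> c x y; rewrite /sign_op !map_cat /= linearP B_ml ?size_map // linearP.
move=> a b x y Hx Hy; rewrite /sign_op !map_cat /=.
by rewrite (B_sym _ _ _ a b) ?size_map ?linearZ //; exact: homog_psign.
Qed.

Lemma multilinear_cons p (F : op) :
  (forall z, multilinear p (fun l => F (z :: l))) ->
  (forall l, size l = p -> forall c x y, F (c *: x + y :: l) = c *: F (x :: l) + F (y :: l)) ->
  multilinear p.+1 F.
Proof.
move=> F_tail F_head [|z xs] ys Hs c x y.
  by apply: F_head; move: Hs => /=; lia.
by apply: (F_tail z xs ys); move: Hs => /=; lia.
Qed.

Lemma graded_symmetric_cons p (F : op) :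
  (forall z, graded_symmetric p (fun l => F (z :: l))) ->
  (forall l, (size l).+1 = p -> forall a b x y, homog a x -> homog b y ->
     F (x :: y :: l) = (-1) ^+ (a && b) *: F (y :: x :: l)) ->
  graded_symmetric p.+1 F.
Proof.
move=> F_tail F_head [|z xs] ys Hs a b x y Hx Hy.
  by apply: F_head => //; move: Hs => /=; lia.
by apply: (F_tail z xs ys) => //; move: Hs => /=; lia.
Qed.

End Operators.

Section ExtendedBracket.
Variables (K : fieldType) (V0 V1 : lmodType K).
Local Notation G := (V0 * V1)%type.
Local Notation op := (operator V0 V1).
Variable br : G -> G -> G.
Hypothesis br_linearl : forall a x y z, br (a *: x + y) z = a *: br x z + br y z.
Hypothesis br_linearr : forall a x y z, br z (a *: x + y) = a *: br z x + br z y.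
Local Notation E := (ext_br br).

Lemma scale_lincombD (k c : K) (u1 u2 v1 v2 : G) :
  k *: ((c *: u1 + u2) + (c *: v1 + v2)) = c *: (k *: (u1 + v1)) + k *: (u2 + v2).
Proof. by rewrite !scalerDr !scalerA [k * c]mulrC addrACA. Qed.

Lemma ext_br_linearl n p q (A A1 A2 B : op) c xs :
  (forall l, A l = c *: A1 l + A2 l) ->
  E n p q A B xs = c *: E n p q A1 B xs + E n p q A2 B xs.
Proof.
elim: n p q A A1 A2 B xs => [|n IH] p q A A1 A2 B xs eA /=; first by rewrite eA br_linearl.
case: xs => [|x xs]; first by rewrite scaler0 addr0.
rewrite -scale_lincombD; congr (_ *: (_ + _)).
  by case: q => [|q]; [rewrite scaler0 addr0 | exact: IH].
case: p eA => [|p] eA; first by rewrite scaler0 addr0.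
have e_dotx y l : dotx p.+1 A y l = c *: dotx p.+1 A1 y l + dotx p.+1 A2 y l.
  by rewrite /dotx eA scalerDr !scalerA mulrC.
by rewrite !(IH _ _ _ _ _ _ _ (e_dotx _)) addrACA -scalerDr.
Qed.

Lemma ext_br_linearr n p q (A B B1 B2 : op) c xs :
  (forall l, B l = c *: B1 l + B2 l) ->
  E n p q A B xs = c *: E n p q A B1 xs + E n p q A B2 xs.
Proof.
elim: n p q A B B1 B2 xs => [|n IH] p q A B B1 B2 xs eB /=; first by rewrite eB br_linearr.
case: xs => [|x xs]; first by rewrite scaler0 addr0.
rewrite -scale_lincombD; congr (_ *: (_ + _)).
  case: q eB => [|q] eB; first by rewrite scaler0 addr0.
  by apply: IH => l; rewrite /dotx eB scalerDr !scalerA mulrC.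
case: p => [|p]; first by rewrite scaler0 addr0.
have e_sign l : sign_op B l = c *: sign_op B1 l + sign_op B2 l.
  by rewrite /sign_op eB linearP.
by rewrite (IH _ _ _ _ _ _ _ eB) (IH _ _ _ _ _ _ _ e_sign) addrACA -scalerDr.
Qed.

Lemma ext_br_eq0l n p q (A B : op) xs : (forall l, A l = 0) -> E n p q A B xs = 0.
Proof.
move=> A0; have : E n p q A B xs = 1 *: E n p q A B xs + E n p q A B xs.
  by apply: ext_br_linearl => l; rewrite A0 scaler0 addr0.
by rewrite scale1r -{1}[E n p q A B xs]addr0 => /addrI/esym.
Qed.

Lemma ext_br_eq0r n p q (A B : op) xs : (forall l, B l = 0) -> E n p q A B xs = 0.
Proof.
move=> B0; have : E n p q A B xs = 1 *: E n p q A B xs + E n p q A B xs.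
  by apply: ext_br_linearr => l; rewrite B0 scaler0 addr0.
by rewrite scale1r -{1}[E n p q A B xs]addr0 => /addrI/esym.
Qed.

Lemma ext_brZl n p q (A B : op) c xs :
  E n p q (fun l => c *: A l) B xs = c *: E n p q A B xs.
Proof.
rewrite (ext_br_linearl _ _ _ _ _ (A1 := A) (A2 := fun=> 0) (c := c)) => [|l].
  by rewrite (ext_br_eq0l _ _ _ _ _ (fun=> erefl)) addr0.
by rewrite addr0.
Qed.

Lemma ext_brZr n p q (A B : op) c xs :
  E n p q A (fun l => c *: B l) xs = c *: E n p q A B xs.
Proof.
rewrite (ext_br_linearr _ _ _ _ _ (B1 := B) (B2 := fun=> 0) (c := c)) => [|l].
  by rewrite (ext_br_eq0r _ _ _ _ _ (fun=> erefl)) addr0.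
by rewrite addr0.
Qed.

Lemma ext_br_dot0l n p q (A B : op) x xs : E n p q (dotx 0 A x) B xs = 0.
Proof. exact/ext_br_eq0l/dotx_order0. Qed.

Lemma ext_br_dot0r n p q (A B : op) x xs : E n p q A (dotx 0 B x) xs = 0.
Proof. exact/ext_br_eq0r/dotx_order0. Qed.

Lemma ext_br_cons n p q (A B : op) x ys :
  E n.+1 p q A B (x :: ys) = n.+1%:R^-1 *: (E n p q.-1 A (dotx q B x) ys +
    (E n p.-1 q (dotx p A (even_part x)) B ys
     + E n p.-1 q (dotx p A (odd_part x)) (sign_op B) ys)).
Proof.
by case: p => [|p]; case: q => [|q]; rewrite //= ?ext_br_dot0l ?ext_br_dot0r ?addr0.
Qed.

Lemma ext_br_local n p q (A A' B B' : op) xs : (p + q)%N = n -> size xs = n ->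
  (forall l, size l = p -> A l = A' l) -> (forall l, size l = q -> B l = B' l) ->
  E n p q A B xs = E n p q A' B' xs.
Proof.
elim: n p q A A' B B' xs => [|n IH] p q A A' B B' xs.
  by case: p q xs => [|//] [|//] [|//] _ _ eA eB /=; rewrite eA // eB.
move=> Hpq; case: xs => [//|x xs] [Hs] eA eB; rewrite !ext_br_cons.
have eA_dotx y l : size l = p.-1 -> dotx p A y l = dotx p A' y l.
  case: p {Hpq} eA => [|p] eA Hl; first by rewrite !dotx_order0.
  by rewrite /dotx eA //= Hl.
congr (_ *: (_ + (_ + _))).
- case: q Hpq eB => [|q] Hpq eB; first by rewrite !ext_br_dot0r.
  apply: IH => //; first lia.
  by move=> l Hl; rewrite /dotx eB //= Hl.
- case: p Hpq eA eA_dotx => [|p] Hpq _ eA_dotx; first by rewrite !ext_br_dot0l.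
  by apply: IH => //; [lia | exact: eA_dotx].
- case: p Hpq eA eA_dotx => [|p] Hpq _ eA_dotx; first by rewrite !ext_br_dot0l.
  apply: IH => //; [lia | exact: eA_dotx |].
  by move=> l Hl; rewrite /sign_op eB // size_map.
Qed.

Lemma ext_br_cons_homog n p q (A B : op) a x ys : (p + q)%N = n.+1 -> size ys = n ->
  multilinear p A -> homog a x ->
  E n.+1 p q A B (x :: ys) = n.+1%:R^-1 *: (E n p q.-1 A (dotx q B x) ys
                                           + E n p.-1 q (dotx p A x) (sign_opb a B) ys).
Proof.
move=> Hpq Hs HA Hx; rewrite ext_br_cons (even_part_homog Hx) (odd_part_homog Hx).
have dotx0_vanish B' : E n p.-1 q (dotx p A 0) B' ys = 0.
  case: p Hpq HA => [|p] Hpq HA; first exact: ext_br_dot0l.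
  rewrite (ext_br_local (A' := fun=> 0) (B' := B')) //; first exact: ext_br_eq0l.
    by move: Hpq => /=; lia.
  by move=> l Hl; rewrite /dotx (multilinear_head0 HA Hl) scaler0.
by case: a {Hx}; rewrite dotx0_vanish ?addr0 ?add0r.
Qed.

Lemma ext_br_dotx_linearr n p q (A B : op) c x y ys : (p + q)%N = n.+1 -> size ys = n ->
  multilinear q B ->
  E n p q.-1 A (dotx q B (c *: x + y)) ys
  = c *: E n p q.-1 A (dotx q B x) ys + E n p q.-1 A (dotx q B y) ys.
Proof.
case: q => [|q] Hpq Hs HB; first by rewrite !ext_br_dot0r scaler0 addr0.
transitivity (E n p q A (fun l => c *: dotx q.+1 B x l + dotx q.+1 B y l) ys).
  by apply: ext_br_local => //= [|l Hl]; [lia | exact: dotx_linear].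
exact: ext_br_linearr.
Qed.

Lemma ext_br_dotx_linearl n p q (A B : op) c x y ys : (p + q)%N = n.+1 -> size ys = n ->
  multilinear p A ->
  E n p.-1 q (dotx p A (c *: x + y)) B ys
  = c *: E n p.-1 q (dotx p A x) B ys + E n p.-1 q (dotx p A y) B ys.
Proof.
case: p => [|p] Hpq Hs HA; first by rewrite !ext_br_dot0l scaler0 addr0.
transitivity (E n p q (fun l => c *: dotx p.+1 A x l + dotx p.+1 A y l) B ys).
  by apply: ext_br_local => //= [|l Hl]; [lia | exact: dotx_linear].
exact: ext_br_linearl.
Qed.

Lemma ext_br_head_linear n p q (A B : op) c x y ys : (p + q)%N = n.+1 -> size ys = n ->
  multilinear p A -> multilinear q B ->
  E n.+1 p q A B (c *: x + y :: ys) = c *: E n.+1 p q A B (x :: ys) + E n.+1 p q A B (y :: ys).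
Proof.
move=> Hpq Hs HA HB; rewrite !ext_br_cons !linearP -scale_lincombD.
rewrite ext_br_dotx_linearr // !ext_br_dotx_linearl //; congr (_ *: (_ + _)).
by rewrite addrACA -scalerDr.
Qed.

Lemma ext_br_cons2 m p q (A B : op) a b x y ys : (p + q)%N = m.+2 -> size ys = m ->
  symmetric_op p A -> homog a x -> homog b y ->
  E m.+2 p q A B (x :: y :: ys) = (m.+2%:R^-1 * m.+1%:R^-1) *:
    (E m p q.-2 A (dotx q.-1 (dotx q B x) y) ys
     + E m p.-1 q.-1 (dotx p A y) (sign_opb b (dotx q B x)) ys
     + E m p.-1 q.-1 (dotx p A x) (dotx q (sign_opb a B) y) ys
     + E m p.-2 q (dotx p.-1 (dotx p A x) y) (sign_opb b (sign_opb a B)) ys).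
Proof.
move=> Hpq Hs HA Hx Hy.
rewrite (@ext_br_cons_homog m.+1 p q A B a x (y :: ys)) //; [|by rewrite /= Hs | exact: HA.1].
have expandQ : E m.+1 p q.-1 A (dotx q B x) (y :: ys) = m.+1%:R^-1 *:
    (E m p q.-2 A (dotx q.-1 (dotx q B x) y) ys
     + E m p.-1 q.-1 (dotx p A y) (sign_opb b (dotx q B x)) ys).
  case: q Hpq => [|q] Hpq; last by apply: ext_br_cons_homog => //; [lia | exact: HA.1].
  rewrite !ext_br_dot0r ?(ext_br_eq0r _ _ _ _ _ (dotx_eq0 _ _ (dotx_order0 _ _))).
  by rewrite (ext_br_eq0r _ _ _ _ _ (sign_opb_eq0 _ (dotx_order0 _ _))) addr0 scaler0.
have expandP : E m.+1 p.-1 q (dotx p A x) (sign_opb a B) (y :: ys) = m.+1%:R^-1 *: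
    (E m p.-1 q.-1 (dotx p A x) (dotx q (sign_opb a B) y) ys
     + E m p.-2 q (dotx p.-1 (dotx p A x) y) (sign_opb b (sign_opb a B)) ys).
  case: p Hpq HA {expandQ} => [|p] Hpq HA; last first.
    by apply: ext_br_cons_homog => //; [lia | exact: (symmetric_op_dotx x HA).1].
  rewrite !ext_br_dot0l ?(ext_br_eq0l _ _ _ _ _ (dotx_eq0 _ _ (dotx_order0 _ _))).
  by rewrite addr0 scaler0.
by rewrite expandQ expandP -scalerDr scalerA !addrA.
Qed.

Lemma ext_br_swap m p q (A B : op) a b x y ys : (p + q)%N = m.+2 -> size ys = m ->
  symmetric_op p A -> symmetric_op q B -> homog a x -> homog b y ->
  E m.+2 p q A B (x :: y :: ys) = (-1) ^+ (a && b) *: E m.+2 p q A B (y :: x :: ys).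
Proof.
move=> Hpq Hs HA HB Hx Hy; rewrite (ext_br_cons2 B Hpq Hs HA Hx Hy).
rewrite (ext_br_cons2 B Hpq Hs HA Hy Hx).
set s := (-1) ^+ (a && b).
have swapBB : E m p q.-2 A (dotx q.-1 (dotx q B x) y) ys
              = s *: E m p q.-2 A (dotx q.-1 (dotx q B y) x) ys.
  case: q Hpq HB => [|[|q]] Hpq HB.
  - by rewrite !(ext_br_eq0r _ _ _ _ _ (dotx_eq0 _ _ (dotx_order0 _ _))) scaler0.
  - by rewrite !ext_br_dot0r scaler0.
  rewrite -ext_brZr; apply: ext_br_local => //= [|l Hl]; first lia.
  rewrite /dotx (HB.2 [::] l _ a b) //=; last lia.
  by rewrite !scalerA mulrC mulrA.
have swapAyBx : E m p.-1 q.-1 (dotx p A y) (sign_opb b (dotx q B x)) ys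
                = s *: E m p.-1 q.-1 (dotx p A y) (dotx q (sign_opb b B) x) ys.
  case: q Hpq HB {swapBB} => [|q] Hpq HB.
    by rewrite (ext_br_eq0r _ _ _ _ _ (sign_opb_eq0 _ (dotx_order0 _ _))) ext_br_dot0r scaler0.
  case: p Hpq HA => [|p] Hpq HA; first by rewrite !ext_br_dot0l scaler0.
  rewrite -ext_brZr; apply: ext_br_local => //= [|l Hl]; first lia.
  by rewrite (dotx_sign_opb b HB.1 Hl Hx) andbC signrZK.
have swapAxBy : E m p.-1 q.-1 (dotx p A x) (dotx q (sign_opb a B) y) ys
                = s *: E m p.-1 q.-1 (dotx p A x) (sign_opb a (dotx q B y)) ys.
  case: q Hpq HB {swapBB swapAyBx} => [|q] Hpq HB.
    by rewrite (ext_br_eq0r _ _ _ _ _ (sign_opb_eq0 _ (dotx_order0 _ _))) ext_br_dot0r scaler0.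
  case: p Hpq HA => [|p] Hpq HA; first by rewrite !ext_br_dot0l scaler0.
  rewrite -ext_brZr; apply: ext_br_local => //= [|l Hl]; first lia.
  exact: (dotx_sign_opb a HB.1 Hl Hy).
have swapAA : E m p.-2 q (dotx p.-1 (dotx p A x) y) (sign_opb b (sign_opb a B)) ys
              = s *: E m p.-2 q (dotx p.-1 (dotx p A y) x) (sign_opb a (sign_opb b B)) ys.
  rewrite sign_opbC.
  case: p Hpq HA {swapBB swapAyBx swapAxBy} => [|[|p]] Hpq HA.
  - by rewrite !(ext_br_eq0l _ _ _ _ _ (dotx_eq0 _ _ (dotx_order0 _ _))) scaler0.
  - by rewrite !ext_br_dot0l scaler0.
  rewrite -ext_brZl; apply: ext_br_local => //= [|l Hl]; first lia.
  rewrite /dotx (HA.2 [::] l _ a b) //=; last lia.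
  by rewrite !scalerA mulrC mulrA.
rewrite swapBB swapAyBx swapAxBy swapAA -!scalerDr !scalerA mulrC.
by congr (_ *: (_ + _)); rewrite addrAC.
Qed.

Lemma symmetric_op_ext_br n p q (A B : op) : (p + q)%N = n ->
  symmetric_op p A -> symmetric_op q B -> symmetric_op n (E n p q A B).
Proof.
elim: n p q A B => [|n IH] p q A B Hpq HA HB.
  by split=> xs ys Hs; exfalso; lia.
have tail z : symmetric_op n (fun l => E n.+1 p q A B (z :: l)).
  apply: symmetric_op_eq => [l|]; first exact: ext_br_cons.
  apply/symmetric_opZ/symmetric_opD; last apply: symmetric_opD.
  - case: q Hpq HB => [|q] Hpq HB.
      by apply: symmetric_op_eq => [l|]; [exact: ext_br_dot0r | exact: symmetric_op0].
    by apply: IH; [lia | | exact: symmetric_op_dotx].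
  - case: p Hpq HA => [|p] Hpq HA.
      by apply: symmetric_op_eq => [l|]; [exact: ext_br_dot0l | exact: symmetric_op0].
    by apply: IH; [lia | exact: symmetric_op_dotx |].
  - case: p Hpq HA => [|p] Hpq HA.
      by apply: symmetric_op_eq => [l|]; [exact: ext_br_dot0l | exact: symmetric_op0].
    by apply: IH; [lia | exact: symmetric_op_dotx | exact: symmetric_op_sign].
split.
  apply: multilinear_cons => [z | l Hl c x y]; first exact: (tail z).1.
  exact: ext_br_head_linear HA.1 HB.1.
apply: graded_symmetric_cons => [z | l Hl a b x y Hx Hy]; first exact: (tail z).2.
by subst n; apply: ext_br_swap.
Qed.

End ExtendedBracket.

Theorem proposition4p2 (K : fieldType) (V0 V1 : lmodType K)
  (br : (V0 * V1)%type -> (V0 * V1)%type -> (V0 * V1)%type) :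
  [pchar K] =i pred0 ->
  is_lie_superalgebra br ->
  forall (A B : nat -> operator V0 V1),
    (forall p, symmetric_op p (A p)) ->
    (forall q, symmetric_op q (B q)) ->
    forall r : nat,
      symmetric_op r
        (fun xs => \sum_(p < r.+1) bracket br p (r - p)%N (A p) (B (r - p)%N) xs).
Proof.
move=> _ [br_linearl br_linearr _ _ _] A B HA HB r.
apply: symmetric_op_sum => i; rewrite /bracket.
have le_ir : (i <= r)%N by rewrite -ltnS.
rewrite subnKC //; apply: symmetric_op_ext_br => //; exact: subnKC.
Qed.
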